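(* Let $a\ge 0$ and, for $x_i\in\mathbb{R}$, let $P_\pm^a(x_i)$ be the smallest $x>x_i$ at which the solution $Y_\pm$ of $y'=-ay-\sin(\pi\omega_\pm x)$, $Y_\pm(x_i)=0$, vanishes, where $\omega_+=3/2$, $\omega_-=1/2$. Let $P(x,a)=P_+^a(P_-^a(x))$, $I_-=(0,\tfrac23)$ and $\Delta(x,a)=P(x,a)-(x+4)$. Then there exists $a_l>0$ (small) such that the roots of $\Delta(x,a)=0$ define a function $x=x(a)$ for all $a\in(0,a_l)$, which satisfies $x(0)=x_0$, where $x_0\in I_-$ is a solution of $$\frac{32}{9\pi}+\frac{2x_0}{3}\cot\frac{3\pi x_0}{2}+(4-2x_0)\cot\frac{\pi x_0}{2}=0.$$
   Context: For $a=0$ the maps are $P_\pm^0(x_i)=\frac{2}{\omega_\pm}\left(1+\lfloor\omega_\pm x_i\rfloor\right)-x_i$, so that $P(x,0)=x+4$ for $x\in I_-$. The map $P(\cdot,a)$ is the return map of the piecewise system $\dot y=-ay-\sin(\pi\omega x)$ with $\omega=3/2$ for $y>0$ and $\omega=1/2$ for $y<0$, for an orbit leaving $y=0$ into $y<0$ at $x$, returning to $y=0$, then traversing $y>0$ and returning to $y=0$. *)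

From Stdlib Require Import Reals Lra.
From Coquelicot Require Import Coquelicot.
Open Scope R_scope.

Definition omega_plus : R := 3/2.
Definition omega_minus : R := 1/2.

Definition cot (x : R) : R := cos x / sin x.

Definition is_sol (w a xi : R) (Y : R -> R) : Prop :=
  Y xi = 0 /\ forall t, is_derive Y t (- a * Y t - sin (PI * w * t)).

(* xr = P_w^a(xi): the smallest x > xi at which the solution vanishes.
   (Relational form; the solution of the linear IVP is unique, and the
   smallest zero, when it exists, is unique.) *)
Definition Pmap (w a xi xr : R) : Prop :=
  exists Y, is_sol w a xi Y /\ xi < xr /\ Y xr = 0 /\
            forall t, xi < t < xr -> Y t <> 0.

Definition Pfull (x a y : R) : Prop :=
  exists x1, Pmap omega_minus a x x1 /\ Pmap omega_plus a x1 y.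

Definition Delta_root (x a : R) : Prop := Pfull x a (x + 4).

Definition in_Iminus (x : R) : Prop := 0 < x < 2/3.

Definition x0_equation (x0 : R) : Prop :=
  32 / (9 * PI) + (2 * x0 / 3) * cot (3 * PI * x0 / 2)
    + (4 - 2 * x0) * cot (PI * x0 / 2) = 0.

From Stdlib Require Import Reals Lra Ranalysis5 ClassicalEpsilon.
From Coquelicot Require Import Coquelicot.
Open Scope R_scope.

(* The solution of [y' = -a y - sin (k t)] vanishing at [xi] is
   [e^{-at} (W(t) - W(xi)) / (a^2 + k^2)], where [W(t) = e^{at} (k cos kt - a sin kt)] has
   derivative [-(a^2 + k^2) e^{at} sin kt]; so the return points are where [W] comes back to
   the level [W(xi)], and they are located by the monotonicity of [W] between zeros of sin.
   Both frequencies have a period dividing 4, so [W(x + 4) = e^{4a} W(x)] and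
   [W(4 - z) = e^{4a} W_{-a}(z)], and [Delta(x, a) = 0] becomes the pair of equations
   [g_-(x, a, z) = 0 = g_+(x, a, z)] in the unknown [z = 4 - P_-(x)]. Each equation alone has
   a unique root [Z_-(x, a)], resp. [Z_+(x, a)], continuous in [(x, a)] and equal to
   [x + a v_-(x) + o(a)], resp. [x + a v_+(x) + o(a)], with [v_- - v_+ = (2 / pi) F] for the
   left-hand side [F] of the equation for [x0]. Hence for small [a > 0] the gap [Z_- - Z_+]
   changes sign in [x] across the zero [x0] of [F], and its zero [x(a)] solves
   [Delta(x(a), a) = 0]. There is no other solution near [x0] because [g_-] decreases and
   [g_+] increases along diagonals [(x + s, z + s)], and the persistence of the sign change
   makes [x(a)] continuous. *)

Lemma strict_incr_of_deriv (f df : R -> R) l u :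
  (forall x, l <= x <= u -> is_derive f x (df x)) -> (forall x, l < x < u -> 0 < df x) ->
  forall x y, l <= x -> x < y -> y <= u -> f x < f y.
Proof.
  intros Hd Hpos x y Hx Hxy Hy.
  destruct (MVT_cor2 f df x y Hxy) as [c [Hfc Hc]].
  - intros c Hc. apply is_derive_Reals, Hd. lra.
  - assert (0 < df c) by (apply Hpos; lra). nra.
Qed.

Lemma strict_decr_of_deriv (f df : R -> R) l u :
  (forall x, l <= x <= u -> is_derive f x (df x)) -> (forall x, l < x < u -> df x < 0) ->
  forall x y, l <= x -> x < y -> y <= u -> f y < f x.
Proof.
  intros Hd Hneg x y Hx Hxy Hy.
  assert (H : - f x < - f y).
  { apply (strict_incr_of_deriv (fun t => - f t) (fun t => - df t) l u); auto.
    - intros t Ht. apply (is_derive_opp f t (df t)), Hd; lra.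
    - intros t Ht. specialize (Hneg t Ht). lra. }
  lra.
Qed.

Lemma derive_zero_const (f : R -> R) : (forall t, is_derive f t 0) -> forall x y, f x = f y.
Proof.
  intros Hd. assert (H : forall x y, x < y -> f x = f y).
  { intros x y Hxy. destruct (MVT_cor2 f (fun _ => 0) x y Hxy) as [c [Hc _]].
    - intros c _. apply is_derive_Reals, Hd.
    - lra. }
  intros x y. destruct (Rtotal_order x y) as [h|[h|h]]; [auto|now subst|symmetry; auto].
Qed.

Lemma continuity_pt_of_ex_derive (f : R -> R) x : ex_derive f x -> continuity_pt f x.
Proof.
  intros H. apply continuity_pt_filterlim.
  apply (ex_derive_continuous (K := R_AbsRing) (V := R_NormedModule)), H.
Qed.

Lemma IVT_sign_change (f : R -> R) l u : l < u -> (forall t, l <= t <= u -> continuity_pt f t) ->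
  f l * f u < 0 -> exists t, l < t < u /\ f t = 0.
Proof.
  intros Hlu Hc Hsign.
  assert (Hopen : forall g : R -> R, (forall t, l <= t <= u -> continuity_pt g t) ->
            g l < 0 -> 0 < g u -> exists t, l < t < u /\ g t = 0).
  { intros g Hg Hl Hu. destruct (IVT_interv g l u Hg Hlu Hl Hu) as [t [[H1 H2] Ht]].
    exists t. split; [split|]; auto.
    - destruct H1 as [H1|H1]; [auto|subst; lra].
    - destruct H2 as [H2|H2]; [auto|subst; lra]. }
  destruct (Rlt_le_dec (f l) 0) as [Hl|Hl].
  - apply Hopen; auto. nra.
  - assert (Hl0 : f l <> 0) by (intros E; rewrite E in Hsign; lra).
    destruct (Hopen (fun t => - f t)) as [t [Ht Hft]].
    + intros t Ht. now apply continuity_pt_opp, Hc.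
    + lra.
    + nra.
    + exists t. split; [auto|lra].
Qed.

Lemma exp_le_of_le x y : x <= y -> exp x <= exp y.
Proof. intros [H| ->]; [left; now apply exp_increasing | lra]. Qed.

Lemma exp_mul_one_minus_le y : exp y * (1 - y) <= 1.
Proof.
  pose proof (exp_ineq1_le (- y)). pose proof (exp_pos y).
  assert (exp y * exp (- y) = 1) by (rewrite <- exp_plus, Rplus_opp_r; apply exp_0).
  nra.
Qed.

Lemma at_right_0_small (b : R) : 0 < b -> at_right 0 (fun a => 0 < a < b).
Proof.
  intros Hb. exists (mkposreal b Hb). intros a Hball Ha.
  change (Rabs (a - 0) < b) in Hball. apply Rabs_def2 in Hball. lra.
Qed.

Lemma at_right_0_bound (P : R -> Prop) :
  at_right 0 P -> exists d, 0 < d /\ forall a, 0 < a < d -> P a.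
Proof.
  intros [d Hd]. exists d. split; [apply cond_pos|].
  intros a Ha. apply Hd; [|lra]. change (Rabs (a - 0) < d). rewrite Rminus_0_r, Rabs_right; lra.
Qed.

Lemma at_right_pos_of_derive (E : R -> R) (D : R) : is_derive E 0 D -> E 0 = 0 -> 0 < D ->
  at_right 0 (fun a => 0 < E a).
Proof.
  intros HE H0 HD. apply is_derive_Reals in HE. destruct (HE D HD) as [d Hd].
  exists d. intros a Hball Ha. change (Rabs (a - 0) < d) in Hball.
  rewrite Rminus_0_r, Rabs_right in Hball by lra.
  specialize (Hd a ltac:(lra) ltac:(rewrite Rabs_right; lra)).
  rewrite Rplus_0_l, H0, Rminus_0_r in Hd. apply Rabs_def2 in Hd.
  assert (0 < E a / a) by lra.
  replace (E a) with (E a / a * a) by (field; lra). nra.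
Qed.

Definition crosses_down (f : R -> R) (l u z : R) : Prop :=
  l < z < u /\ forall y, l <= y <= u -> (0 < f y <-> y < z) /\ (f y < 0 <-> z < y).

Lemma crosses_down_root f l u z : crosses_down f l u z -> f z = 0.
Proof.
  intros [Hz H]. destruct (H z ltac:(lra)) as [H1 H2].
  destruct (Rtotal_order (f z) 0) as [h|[h|h]]; auto.
  - apply H2 in h. lra.
  - apply H1 in h. lra.
Qed.

Lemma crosses_down_lt f l u z y : crosses_down f l u z -> l <= y <= u -> 0 < f y -> y < z.
Proof. intros [_ H] Hy. exact (proj1 (proj1 (H y Hy))). Qed.

Lemma crosses_down_gt f l u z y : crosses_down f l u z -> l <= y <= u -> f y < 0 -> z < y.
Proof. intros [_ H] Hy. exact (proj1 (proj2 (H y Hy))). Qed.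

Lemma crosses_down_pos f l u z y : crosses_down f l u z -> l <= y < z -> 0 < f y.
Proof. intros [Hz H] Hy. apply (proj2 (proj1 (H y ltac:(lra)))). lra. Qed.

Lemma crosses_down_neg f l u z y : crosses_down f l u z -> z < y <= u -> f y < 0.
Proof. intros [Hz H] Hy. apply (proj2 (proj2 (H y ltac:(lra)))). lra. Qed.

Lemma crosses_down_zero f l u z y : crosses_down f l u z -> l <= y <= u -> f y = 0 -> y = z.
Proof.
  intros [_ H] Hy Hf. destruct (H y Hy) as [H1 H2].
  destruct (Rtotal_order y z) as [h|[h|h]]; auto.
  - apply H1 in h. lra.
  - apply H2 in h. lra.
Qed.

Lemma crosses_down_of_unique_zero f l u z :
  (forall y, l <= y <= u -> continuity_pt f y) -> 0 < f l -> f u < 0 ->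
  l < z < u -> f z = 0 -> (forall y, l < y < u -> f y = 0 -> y = z) ->
  crosses_down f l u z.
Proof.
  intros Hc Hl Hu Hz Hfz Huniq. split; [exact Hz|].
  assert (Hpos : forall y, l <= y < z -> 0 < f y).
  { intros y Hy. destruct (Req_dec y l) as [->|Hyl]; [exact Hl|].
    destruct (Rtotal_order (f y) 0) as [h|[h|h]]; [exfalso|exfalso|exact h].
    - destruct (IVT_sign_change f l y) as [t [Ht Hft]]; [lra|intros; apply Hc; lra|nra|].
      assert (t = z) by (apply Huniq; [lra|auto]). lra.
    - assert (y = z) by (apply Huniq; [lra|auto]). lra. }
  assert (Hneg : forall y, z < y <= u -> f y < 0).
  { intros y Hy. destruct (Req_dec y u) as [->|Hyu]; [exact Hu|].
    destruct (Rtotal_order (f y) 0) as [h|[h|h]]; [exact h|exfalso|exfalso].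
    - assert (y = z) by (apply Huniq; [lra|auto]). lra.
    - destruct (IVT_sign_change f y u) as [t [Ht Hft]]; [lra|intros; apply Hc; lra|nra|].
      assert (t = z) by (apply Huniq; [lra|auto]). lra. }
  intros y Hy. destruct (Rtotal_order y z) as [h|[h|h]].
  - specialize (Hpos y ltac:(lra)). split; split; intros; lra.
  - subst. split; split; intros; lra.
  - specialize (Hneg y ltac:(lra)). split; split; intros; lra.
Qed.

Definition root_between (f : R -> R) (l u : R) : R :=
  epsilon (inhabits 0) (fun z => l < z < u /\ f z = 0).

Lemma crosses_down_root_between f l u : l < u ->
  (forall y, l <= y <= u -> continuity_pt f y) -> 0 < f l -> f u < 0 ->
  (forall y y', l < y < u -> l < y' < u -> f y = 0 -> f y' = 0 -> y = y') ->
  crosses_down f l u (root_between f l u).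
Proof.
  intros Hlu Hc Hl Hu Huniq.
  assert (Hex : exists z, l < z < u /\ f z = 0).
  { apply IVT_sign_change; auto. nra. }
  destruct (epsilon_spec (inhabits 0) _ Hex) as [Hz Hfz].
  apply crosses_down_of_unique_zero; auto.
Qed.

Lemma crosses_down_root_between_decr f l u : l < u ->
  (forall y, l <= y <= u -> continuity_pt f y) -> 0 < f l -> f u < 0 ->
  (forall x y, l <= x -> x < y -> y <= u -> f y < f x) ->
  crosses_down f l u (root_between f l u).
Proof.
  intros Hlu Hc Hl Hu Hdecr. apply crosses_down_root_between; auto.
  intros y y' Hy Hy' Hf Hf'. destruct (Rtotal_order y y') as [h|[h|h]]; auto.
  - specialize (Hdecr y y' ltac:(lra) h ltac:(lra)). lra.
  - specialize (Hdecr y' y ltac:(lra) h ltac:(lra)). lra.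
Qed.

Lemma locally_pos_of_continuity_pt f s0 : continuity_pt f s0 -> 0 < f s0 ->
  locally s0 (fun s => 0 < f s).
Proof.
  intros Hc Hpos. apply continuity_pt_filterlim in Hc.
  apply Hc. apply (locally_interval _ _ 0 p_infty); simpl; auto.
Qed.

Lemma continuity_pt_crossing (G : R -> R -> R) (Z : R -> R) l u s0 :
  locally s0 (fun s => crosses_down (G s) l u (Z s)) ->
  (forall y, l <= y <= u -> continuity_pt (fun s => G s y) s0) ->
  continuity_pt Z s0.
Proof.
  intros Hcross Hc. apply continuity_pt_filterlim, filterlim_locally. intros eps.
  pose proof (locally_singleton _ _ Hcross) as C0. destruct (proj1 C0).
  set (e := Rmin eps (Rmin (Z s0 - l) (u - Z s0)) / 2).
  assert (He : 0 < e /\ e < eps /\ e < Z s0 - l /\ e < u - Z s0).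
  { pose proof (cond_pos eps). unfold e, Rmin. repeat destruct Rle_dec; lra. }
  assert (Hleft : locally s0 (fun s => 0 < G s (Z s0 - e))).
  { apply locally_pos_of_continuity_pt; [apply Hc; lra|].
    apply (crosses_down_pos _ _ _ _ _ C0). lra. }
  assert (Hright : locally s0 (fun s => 0 < - G s (Z s0 + e))).
  { apply (locally_pos_of_continuity_pt (fun s => - G s (Z s0 + e))).
    - apply continuity_pt_opp, Hc. lra.
    - pose proof (crosses_down_neg _ _ _ _ (Z s0 + e) C0 ltac:(lra)). lra. }
  generalize (filter_and _ _ Hcross (filter_and _ _ Hleft Hright)).
  apply filter_imp. intros s [Cs [Hl Hr]].
  assert (Z s0 - e < Z s) by (apply (crosses_down_lt _ _ _ _ _ Cs); lra).
  assert (Z s < Z s0 + e) by (apply (crosses_down_gt _ _ _ _ _ Cs); lra).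
  change (Rabs (Z s - Z s0) < eps). apply Rabs_def1; lra.
Qed.

Lemma crossing_vs_line (G : R -> R -> R) (Z : R -> R) (l u x c D : R) : l < x < u ->
  at_right 0 (fun a => crosses_down (G a) l u (Z a)) -> G 0 x = 0 ->
  is_derive (fun a => G a (x + a * c)) 0 D ->
  (0 < D -> at_right 0 (fun a => x + a * c < Z a)) /\
  (D < 0 -> at_right 0 (fun a => Z a < x + a * c)).
Proof.
  intros Hx Hcross H0 HD.
  assert (Hin : at_right 0 (fun a => l <= x + a * c <= u)).
  { apply filter_le_within.
    assert (Hc : continuity_pt (fun a => x + a * c) 0)
      by (apply continuity_pt_of_ex_derive; auto_derive; auto).
    apply continuity_pt_filterlim in Hc. apply (Hc (fun y => l <= y <= u)).
    rewrite Rmult_0_l, Rplus_0_r.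
    apply (locally_interval _ _ l u); simpl; [lra|lra|intros; lra]. }
  assert (H0' : G 0 (x + 0 * c) = 0) by (now rewrite Rmult_0_l, Rplus_0_r).
  split; intros HDs.
  - generalize (filter_and _ _ Hcross (filter_and _ _ Hin (at_right_pos_of_derive _ D HD H0' HDs))).
    apply filter_imp. intros a [Ca [Hy Hpos]]. now apply (crosses_down_lt _ _ _ _ _ Ca).
  - assert (Hneg : at_right 0 (fun a => 0 < - G a (x + a * c))).
    { apply (at_right_pos_of_derive _ (- D)); [now apply (is_derive_opp (fun a => G a (x + a * c)))|
        rewrite H0'; ring|lra]. }
    generalize (filter_and _ _ Hcross (filter_and _ _ Hin Hneg)).
    apply filter_imp. intros a [Ca [Hy Hpos]]. apply (crosses_down_gt _ _ _ _ _ Ca); lra.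
Qed.

(** * Return points of the linear equation *)

Definition W (k a t : R) : R := exp (a * t) * (k * cos (k * t) - a * sin (k * t)).

Lemma is_derive_W k a t : is_derive (W k a) t (- (a * a + k * k) * exp (a * t) * sin (k * t)).
Proof. unfold W. auto_derive; auto. ring. Qed.

Lemma continuity_pt_W k a t : continuity_pt (W k a) t.
Proof. apply continuity_pt_of_ex_derive. eexists. apply is_derive_W. Qed.

Definition return_sol (k a xi t : R) : R :=
  exp (- (a * t)) * (W k a t - W k a xi) / (a * a + k * k).

Lemma is_sol_return_sol w a xi : PI * w <> 0 -> is_sol w a xi (return_sol (PI * w) a xi).
Proof.
  intros Hk. assert (0 < a * a + PI * w * (PI * w)) by nra. split.
  - unfold return_sol. rewrite Rminus_diag. field. lra.
  - intros t. unfold return_sol, W. auto_derive; [lra|].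
    rewrite exp_Ropp. field. split; [apply Rgt_not_eq, exp_pos | lra].
Qed.

Lemma is_sol_unique w a xi Y Z : is_sol w a xi Y -> is_sol w a xi Z -> forall t, Y t = Z t.
Proof.
  intros [HY0 HY] [HZ0 HZ] t.
  set (D := fun t => (Y t - Z t) * exp (a * t)).
  assert (HD : forall s, is_derive D s 0).
  { intros s. evar (l : R). replace 0 with l; [unfold D, l|].
    - apply (is_derive_mult (fun t => Y t - Z t) (fun t => exp (a * t))).
      + apply (is_derive_minus Y Z); auto.
      + auto_derive; auto.
      + intros n m. apply Rmult_comm.
    - unfold l, minus, plus, opp, mult; simpl. ring. }
  assert (E := derive_zero_const D HD t xi). unfold D in E.
  rewrite HY0, HZ0, Rminus_0_r, Rmult_0_l in E.
  assert (0 < exp (a * t)) by apply exp_pos. nra.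
Qed.

Definition first_return (f : R -> R) (xi xr : R) : Prop :=
  xi < xr /\ f xr = f xi /\ forall t, xi < t < xr -> f t <> f xi.

Lemma return_sol_eq0 k a xi t : k <> 0 -> (return_sol k a xi t = 0 <-> W k a t = W k a xi).
Proof.
  intros Hk. assert (0 < exp (- (a * t))) by apply exp_pos.
  assert (0 < a * a + k * k) by nra.
  assert (E : exp (- (a * t)) * (W k a t - W k a xi) = return_sol k a xi t * (a * a + k * k))
    by (unfold return_sol; field; lra).
  split; intros H1.
  - rewrite H1, Rmult_0_l in E. nra.
  - unfold return_sol. rewrite H1, Rminus_diag. field. lra.
Qed.

Lemma Pmap_iff w a xi xr : PI * w <> 0 -> (Pmap w a xi xr <-> first_return (W (PI * w) a) xi xr).
Proof.
  intros Hk. pose proof (is_sol_return_sol w a xi Hk) as Hsol.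
  split.
  - intros [Y [HY [Hlt [Hr Hne]]]].
    assert (HU := is_sol_unique w a xi Y _ HY Hsol).
    split; [|split]; auto.
    + apply (return_sol_eq0 _ _ _ _ Hk). now rewrite <- HU.
    + intros t Ht E. apply (Hne t Ht). rewrite HU. now apply return_sol_eq0.
  - intros [Hlt [Hr Hne]]. exists (return_sol (PI * w) a xi).
    split; [|split; [|split]]; auto.
    + now apply return_sol_eq0.
    + intros t Ht E. apply (Hne t Ht). now apply (return_sol_eq0 _ _ _ _ Hk).
Qed.

Lemma W_decr k a l u : (forall t, l < t < u -> 0 < sin (k * t)) ->
  forall x y, l <= x -> x < y -> y <= u -> W k a y < W k a x.
Proof.
  intros Hs. apply (strict_decr_of_deriv _ _ l u (fun t _ => is_derive_W k a t)).
  intros t Ht. specialize (Hs t Ht). assert (0 < exp (a * t)) by apply exp_pos.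
  assert (k <> 0) by (intros ->; rewrite Rmult_0_l, sin_0 in Hs; lra).
  assert (0 < a * a + k * k) by nra.
  assert (0 < exp (a * t) * sin (k * t)) by nra. nra.
Qed.

Lemma W_incr k a l u : (forall t, l < t < u -> sin (k * t) < 0) ->
  forall x y, l <= x -> x < y -> y <= u -> W k a x < W k a y.
Proof.
  intros Hs. apply (strict_incr_of_deriv _ _ l u (fun t _ => is_derive_W k a t)).
  intros t Ht. specialize (Hs t Ht). assert (0 < exp (a * t)) by apply exp_pos.
  assert (k <> 0) by (intros ->; rewrite Rmult_0_l, sin_0 in Hs; lra).
  assert (0 < a * a + k * k) by nra.
  assert (exp (a * t) * sin (k * t) < 0) by nra. nra.
Qed.

Lemma W_shift k a T x : cos (k * T) = 1 -> sin (k * T) = 0 ->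
  W k a (x + T) = exp (a * T) * W k a x.
Proof.
  intros Hc Hs. unfold W. rewrite !Rmult_plus_distr_l, cos_plus, sin_plus, Hc, Hs, exp_plus.
  ring.
Qed.

Lemma W_reflect k a T z : cos (k * T) = 1 -> sin (k * T) = 0 ->
  W k a (T - z) = exp (a * T) * W k (- a) z.
Proof.
  intros Hc Hs. unfold W.
  replace (a * (T - z)) with (a * T + - a * z) by ring.
  replace (k * (T - z)) with (k * T - k * z) by ring.
  rewrite cos_minus, sin_minus, Hc, Hs, exp_plus. ring.
Qed.

Definition k_minus : R := PI * omega_minus.
Definition k_plus : R := PI * omega_plus.

Lemma k_minus_eq : k_minus = PI / 2.
Proof. unfold k_minus, omega_minus. field. Qed.

Lemma k_plus_eq : k_plus = 3 * PI / 2.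
Proof. unfold k_plus, omega_plus. field. Qed.

Lemma PI_gt_3 : 3 < PI.
Proof. pose proof PI2_3_2. lra. Qed.

Lemma k_minus_pos : 0 < k_minus.
Proof. rewrite k_minus_eq. pose proof PI_gt_3. lra. Qed.

Lemma k_plus_pos : 0 < k_plus.
Proof. rewrite k_plus_eq. pose proof PI_gt_3. lra. Qed.

Lemma k_minus_period : cos (k_minus * 4) = 1 /\ sin (k_minus * 4) = 0.
Proof.
  replace (k_minus * 4) with (2 * PI) by (rewrite k_minus_eq; field).
  split; [apply cos_2PI | apply sin_2PI].
Qed.

Lemma k_plus_period : cos (k_plus * 4) = 1 /\ sin (k_plus * 4) = 0.
Proof.
  replace (k_plus * 4) with (0 + 2 * INR 3 * PI) by (rewrite k_plus_eq; simpl; field).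
  rewrite cos_period, sin_period. split; [apply cos_0 | apply sin_0].
Qed.

Lemma sin_pos_shift (n : nat) y : 2 * INR n * PI < y < 2 * INR n * PI + PI -> 0 < sin y.
Proof.
  intros Hy. replace y with (y - 2 * INR n * PI + 2 * INR n * PI) by ring.
  rewrite sin_period. apply sin_gt_0; lra.
Qed.

Lemma sin_neg_shift (n : nat) y : 2 * INR n * PI + PI < y < 2 * INR n * PI + 2 * PI -> sin y < 0.
Proof.
  intros Hy. replace y with (y - 2 * INR n * PI + 2 * INR n * PI) by ring.
  rewrite sin_period. apply sin_lt_0; lra.
Qed.

Lemma sin_k_minus_pos t : 0 < t < 2 -> 0 < sin (k_minus * t).
Proof.
  intros Ht. apply (sin_pos_shift 0). rewrite k_minus_eq. simpl. pose proof PI_gt_3. nra.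
Qed.

Lemma sin_k_minus_neg t : 2 < t < 4 -> sin (k_minus * t) < 0.
Proof.
  intros Ht. apply (sin_neg_shift 0). rewrite k_minus_eq. simpl. pose proof PI_gt_3. nra.
Qed.

Lemma sin_k_plus_pos (n : nat) t :
  4 * INR n / 3 < t < 4 * INR n / 3 + 2 / 3 -> 0 < sin (k_plus * t).
Proof.
  intros Ht. apply (sin_pos_shift n). rewrite k_plus_eq. pose proof PI_gt_3. nra.
Qed.

Lemma sin_k_plus_neg (n : nat) t :
  4 * INR n / 3 + 2 / 3 < t < 4 * INR n / 3 + 4 / 3 -> sin (k_plus * t) < 0.
Proof.
  intros Ht. apply (sin_neg_shift n). rewrite k_plus_eq. pose proof PI_gt_3. nra.
Qed.

Lemma cos_PI_40_bounds : 995 / 1000 <= cos (PI / 40) <= 9972 / 10000.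
Proof.
  pose proof PI_gt_3. pose proof PI_4.
  destruct (cos_bound (PI / 40) 0) as [Hl Hu]; try lra.
  unfold cos_approx, cos_term in Hl, Hu. simpl in Hl, Hu.
  assert (Hsq : 9 / 1600 <= (PI / 40) ^ 2 <= 1 / 100) by (split; nra).
  field_simplify in Hl. field_simplify in Hu. split; nra.
Qed.

(** * Reduction of Delta = 0 to a pair of equations *)

(* [z] stands for [4 - P_-(x)]: by [g_minus_reflect] and [g_plus_reflect], [g_minus x a z = 0]
   says that [W k_minus a] takes the same value at [x] and at [4 - z], and [g_plus x a z = 0]
   that [W k_plus a] takes the same value at [4 - z] and at [x + 4]. *)
Definition g_minus (x a z : R) : R := exp (a * 4) * W k_minus (- a) z - W k_minus a x.
Definition g_plus (x a z : R) : R := W k_plus (- a) z - W k_plus a x.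
Definition matches (x a z : R) : Prop := g_minus x a z = 0 /\ g_plus x a z = 0.

Lemma g_minus_reflect x a z : W k_minus a (4 - z) - W k_minus a x = g_minus x a z.
Proof. destruct k_minus_period. unfold g_minus. now rewrite W_reflect. Qed.

Lemma g_plus_reflect x a z :
  W k_plus a (4 - z) - W k_plus a (x + 4) = exp (a * 4) * g_plus x a z.
Proof. destruct k_plus_period. unfold g_plus. rewrite W_reflect, W_shift by auto. ring. Qed.

Lemma g_minus_decr x a y y' : 0 <= y -> y < y' -> y' <= 2 -> g_minus x a y' < g_minus x a y.
Proof.
  intros. unfold g_minus. pose proof (exp_pos (a * 4)).
  assert (W k_minus (- a) y' < W k_minus (- a) y).
  { apply (W_decr _ _ 0 2); auto. intros t Ht. apply sin_k_minus_pos; lra. }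
  nra.
Qed.

Lemma g_plus_decr x a y y' : 0 <= y -> y < y' -> y' <= 2 / 3 -> g_plus x a y' < g_plus x a y.
Proof.
  intros. unfold g_plus.
  assert (W k_plus (- a) y' < W k_plus (- a) y).
  { apply (W_decr _ _ 0 (2 / 3)); auto. intros t Ht. apply (sin_k_plus_pos 0); simpl; lra. }
  lra.
Qed.

Lemma g_minus_at_x_pos x a : 0 < a -> 0 < x < 1 -> 0 < g_minus x a x.
Proof.
  intros Ha Hx. unfold g_minus, W.
  assert (Hs : 0 < sin (k_minus * x)) by (apply sin_k_minus_pos; lra).
  assert (Hc : 0 < cos (k_minus * x))
    by (rewrite k_minus_eq; apply cos_gt_0; pose proof PI_gt_3; nra).
  pose proof k_minus_pos.
  assert (E : exp (a * 4) * exp (- a * x) = exp (a * 4 - a * x))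
    by (rewrite <- exp_plus; f_equal; ring).
  assert (exp (a * x) < exp (a * 4 - a * x)) by (apply exp_increasing; nra).
  pose proof (exp_pos (a * x)).
  assert (0 < k_minus * cos (k_minus * x)) by nra.
  assert (0 < (exp (a * 4 - a * x) - exp (a * x)) * (k_minus * cos (k_minus * x))) by nra.
  assert (0 < a * sin (k_minus * x)) by nra.
  assert (0 < (exp (a * 4 - a * x) + exp (a * x)) * (a * sin (k_minus * x))).
  { pose proof (exp_pos (a * 4 - a * x)). apply Rmult_lt_0_compat; lra. }
  rewrite <- Rmult_assoc, E. nra.
Qed.

Lemma g_minus_at_1_neg x a : 0 <= a <= 1 / 10 -> 1 / 3 < x < 2 / 3 -> g_minus x a 1 < 0.
Proof.
  intros Ha Hx. pose proof PI_gt_3. pose proof PI_4. unfold g_minus, W.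
  rewrite k_minus_eq, !Rmult_1_r, cos_PI2, sin_PI2.
  assert (E : exp (a * 4) * exp (- a) = exp (3 * a)) by (rewrite <- exp_plus; f_equal; ring).
  assert (Hc : 1 / 2 < cos (PI / 2 * x)) by (rewrite <- cos_PI3; apply cos_decreasing_1; nra).
  pose proof (SIN_bound (PI / 2 * x)).
  pose proof (exp_mul_one_minus_le (3 * a)). pose proof (exp_pos (3 * a)).
  pose proof (exp_ineq1_le (a * x)).
  replace (exp (a * 4) * (exp (- a) * (PI / 2 * 0 - - a * 1))) with (a * exp (3 * a))
    by (rewrite <- E; ring).
  assert (a * exp (3 * a) <= 1 / 7) by nra.
  assert (6 / 10 < PI / 2 * cos (PI / 2 * x) - a * sin (PI / 2 * x)) by nra.
  assert (1 <= exp (a * x)) by nra.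
  nra.
Qed.

Lemma W_plus_neg x a : 0 <= a -> 1 / 3 < x < 2 / 3 -> W k_plus a x < 0.
Proof.
  intros Ha Hx. unfold W.
  assert (Hs : 0 < sin (k_plus * x)) by (apply (sin_k_plus_pos 0); simpl; lra).
  assert (Hc : cos (k_plus * x) < 0)
    by (rewrite k_plus_eq; apply cos_lt_0; pose proof PI_gt_3; nra).
  pose proof k_plus_pos. pose proof (exp_pos (a * x)).
  assert (k_plus * cos (k_plus * x) - a * sin (k_plus * x) < 0) by nra.
  nra.
Qed.

Lemma g_plus_at_third_pos x a : 0 <= a -> 1 / 3 < x < 2 / 3 -> 0 < g_plus x a (1 / 3).
Proof.
  intros Ha Hx. pose proof (W_plus_neg x a Ha Hx). unfold g_plus.
  replace (W k_plus (- a) (1 / 3)) with (a * exp (- a * (1 / 3))).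
  - pose proof (exp_pos (- a * (1 / 3))). nra.
  - unfold W. rewrite k_plus_eq. replace (3 * PI / 2 * (1 / 3)) with (PI / 2) by field.
    rewrite cos_PI2, sin_PI2. ring.
Qed.

Lemma g_plus_at_two_thirds_neg x a :
  0 <= a <= 1 / 1000 -> 1 / 2 <= x <= 13 / 20 -> g_plus x a (2 / 3) < 0.
Proof.
  intros Ha Hx. pose proof PI_gt_3. pose proof PI_4. unfold g_plus, W. rewrite k_plus_eq.
  replace (3 * PI / 2 * (2 / 3)) with PI by field. rewrite cos_PI, sin_PI.
  assert (Hc : - (9972 / 10000) <= cos (3 * PI / 2 * x)).
  { replace (3 * PI / 2 * x) with (PI - (PI - 3 * PI / 2 * x)) by ring.
    rewrite cos_minus, cos_PI, sin_PI.
    assert (cos (PI - 3 * PI / 2 * x) <= cos (PI / 40)) by (apply cos_decr_1; nra).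
    pose proof cos_PI_40_bounds. lra. }
  pose proof (SIN_bound (3 * PI / 2 * x)).
  set (B := 3 * PI / 2 * cos (3 * PI / 2 * x) - a * sin (3 * PI / 2 * x)).
  assert (HB : - (9972 / 10000) * (3 * PI / 2) - a <= B) by (unfold B; nra).
  pose proof (exp_ineq1_le (- a * (2 / 3))).
  pose proof (exp_mul_one_minus_le (a * x)). pose proof (exp_pos (a * x)).
  assert (0 < 1 - a * x) by nra.
  assert (1 <= (1 + a) * (1 - a * x)) by nra.
  assert (exp (a * x) <= 1 + a) by nra.
  destruct (Rle_lt_dec 0 B).
  - pose proof (exp_pos (- a * (2 / 3))). nra.
  - assert ((1 + a) * B <= exp (a * x) * B) by nra. nra.
Qed.

Lemma Delta_root_of_matches x a z : in_Iminus x -> in_Iminus z -> matches x a z -> Delta_root x a.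
Proof.
  unfold in_Iminus. intros Hx Hz [Hm Hp]. exists (4 - z). split.
  - apply Pmap_iff; [apply Rgt_not_eq, k_minus_pos|]. fold k_minus.
    pose proof (g_minus_reflect x a z) as Hret.
    split; [lra|split; [lra|]].
    intros t Ht. destruct (Rle_lt_dec t 2).
    + assert (W k_minus a t < W k_minus a x); [|lra].
      apply (W_decr _ _ 0 2); try lra. intros s Hs. apply sin_k_minus_pos; lra.
    + assert (W k_minus a t < W k_minus a (4 - z)); [|lra].
      apply (W_incr _ _ 2 4); try lra. intros s Hs. apply sin_k_minus_neg; lra.
  - apply Pmap_iff; [apply Rgt_not_eq, k_plus_pos|]. fold k_plus.
    pose proof (g_plus_reflect x a z) as Hret. rewrite Hp, Rmult_0_r in Hret.
    split; [lra|split; [lra|]].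
    intros t Ht. destruct (Rle_lt_dec t 4).
    + assert (W k_plus a (4 - z) < W k_plus a t); [|lra].
      apply (W_incr _ _ (10 / 3) 4); try lra.
      intros s Hs. apply (sin_k_plus_neg 2); simpl; lra.
    + assert (W k_plus a (x + 4) < W k_plus a t); [|lra].
      apply (W_decr _ _ 4 (14 / 3)); try lra.
      intros s Hs. apply (sin_k_plus_pos 3); simpl; lra.
Qed.

Lemma first_return_minus x a x1 : 0 < a <= 1 / 10 -> 1 / 3 < x < 2 / 3 ->
  first_return (W k_minus a) x x1 -> x < 4 - x1 < 1 /\ g_minus x a (4 - x1) = 0.
Proof.
  intros Ha Hx [Hxx1 [Hret Hfirst]].
  assert (Hdecr : forall y y', 0 <= y -> y < y' -> y' <= 2 -> W k_minus a y' < W k_minus a y).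
  { apply W_decr. intros t Ht. apply sin_k_minus_pos; lra. }
  assert (Hgt : 2 < x1).
  { destruct (Rlt_le_dec 2 x1) as [h|h]; [exact h|].
    specialize (Hdecr x x1 ltac:(lra) Hxx1 h). lra. }
  assert (Hlt : x1 < 4).
  { destruct (Rlt_le_dec x1 4) as [h|h]; [exact h|exfalso].
    destruct (IVT_sign_change (fun t => W k_minus a t - W k_minus a x) 2 4)
      as [t [Ht Hzero]]; [lra| | |].
    - intros t _. apply continuity_pt_minus; [apply continuity_pt_W | apply continuity_pt_const].
      now intros u v.
    - specialize (Hdecr x 2 ltac:(lra) ltac:(lra) ltac:(lra)).
      replace 4 with (4 - 0) by ring. rewrite g_minus_reflect.
      pose proof (g_minus_decr x a 0 x ltac:(lra) ltac:(lra) ltac:(lra)).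
      pose proof (g_minus_at_x_pos x a ltac:(lra) ltac:(lra)).
      assert (0 < g_minus x a 0) by lra. nra.
    - apply (Hfirst t); lra. }
  assert (Hroot : g_minus x a (4 - x1) = 0)
    by (rewrite <- g_minus_reflect; ring_simplify (4 - (4 - x1)); lra).
  split; [split|exact Hroot].
  - destruct (Rlt_le_dec x (4 - x1)) as [h|h]; [exact h|exfalso].
    pose proof (g_minus_at_x_pos x a ltac:(lra) ltac:(lra)).
    destruct h as [h|h]; [|rewrite h in *; lra].
    pose proof (g_minus_decr x a (4 - x1) x ltac:(lra) h ltac:(lra)). lra.
  - destruct (Rlt_le_dec (4 - x1) 1) as [h|h]; [exact h|exfalso].
    pose proof (g_minus_at_1_neg x a ltac:(lra) Hx).
    destruct h as [h|h]; [|rewrite <- h in *; lra].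
    pose proof (g_minus_decr x a 1 (4 - x1) ltac:(lra) h ltac:(lra)). lra.
Qed.

Lemma first_return_plus x a z : 0 <= a <= 1 / 1000 -> 1 / 2 <= x <= 13 / 20 -> x < z < 1 ->
  first_return (W k_plus a) (4 - z) (x + 4) -> z < 2 / 3 /\ g_plus x a z = 0.
Proof.
  intros Ha Hx Hz [Hlt [Hret Hfirst]].
  assert (Hroot : g_plus x a z = 0).
  { pose proof (g_plus_reflect x a z). pose proof (exp_pos (a * 4)).
    apply (Rmult_eq_reg_l (exp (a * 4))); lra. }
  split; [|exact Hroot].
  destruct (Rlt_le_dec z (2 / 3)) as [h|[h|h]]; [exact h|exfalso|].
  - destruct (IVT_sign_change (fun t => W k_plus a t - W k_plus a (4 - z)) (10 / 3) 4)
      as [t [Ht Hzero]]; [lra| | |].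
    + intros t _. apply continuity_pt_minus; [apply continuity_pt_W | apply continuity_pt_const].
      now intros u v.
    + assert (W k_plus a (10 / 3) < W k_plus a (4 - z)).
      { apply (W_decr _ _ (8 / 3) (10 / 3)); try lra.
        intros s Hs. apply (sin_k_plus_pos 2); simpl; lra. }
      assert (H0 : W k_plus a 0 = k_plus)
        by (unfold W; rewrite !Rmult_0_r, exp_0, cos_0, sin_0; ring).
      assert (W k_plus a (4 - z) < W k_plus a 4).
      { destruct k_plus_period.
        assert (H4 : W k_plus a (0 + 4) = exp (a * 4) * k_plus)
          by (rewrite W_shift, H0 by auto; ring).
        rewrite Rplus_0_l in H4. rewrite <- Hret, W_shift, H4 by auto.
        pose proof (W_plus_neg x a ltac:(lra) ltac:(lra)). pose proof k_plus_pos.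
        pose proof (exp_pos (a * 4)). nra. }
      nra.
    + apply (Hfirst t); lra.
  - pose proof (g_plus_at_two_thirds_neg x a Ha Hx). rewrite <- h in Hroot. lra.
Qed.

Lemma matches_of_Delta_root x a : 0 < a <= 1 / 1000 -> 1 / 2 <= x <= 13 / 20 ->
  Delta_root x a -> exists z, x < z < 2 / 3 /\ matches x a z.
Proof.
  intros Ha Hx [x1 [Hm Hp]].
  apply Pmap_iff in Hm; [|apply Rgt_not_eq, k_minus_pos].
  apply Pmap_iff in Hp; [|apply Rgt_not_eq, k_plus_pos].
  fold k_minus in Hm. fold k_plus in Hp.
  destruct (first_return_minus x a x1 ltac:(lra) ltac:(lra) Hm) as [Hz Hroot_minus].
  replace x1 with (4 - (4 - x1)) in Hp by ring.
  destruct (first_return_plus x a (4 - x1) ltac:(lra) Hx Hz Hp) as [Hz' Hroot_plus].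
  exists (4 - x1). split; [lra|split; assumption].
Qed.

Lemma g_minus_diag_decr x a z s : 0 <= a -> 0 < x < z -> 0 < s -> z + s <= 1 ->
  g_minus (x + s) a (z + s) < g_minus x a z.
Proof.
  intros Ha Hxz Hs Hzs. pose proof PI_gt_3. pose proof k_minus_pos.
  replace (g_minus x a z) with (g_minus (x + 0) a (z + 0)) by (now rewrite !Rplus_0_r).
  apply (strict_decr_of_deriv (fun t => g_minus (x + t) a (z + t))
    (fun t => (a * a + k_minus * k_minus) * (exp (a * (x + t)) * sin (k_minus * (x + t))
               - exp (a * 4) * (exp (- a * (z + t)) * sin (k_minus * (z + t))))) 0 s);
    [|intros t Ht|lra|lra|lra].
  - intros t _. unfold g_minus, W. auto_derive; auto. ring.
  - assert (Hsin : sin (k_minus * (x + t)) < sin (k_minus * (z + t)))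
      by (rewrite k_minus_eq; apply sin_increasing_1; nra).
    assert (0 < sin (k_minus * (x + t))) by (apply sin_k_minus_pos; lra).
    assert (Hexp : exp (a * (x + t)) <= exp (a * 4) * exp (- a * (z + t)))
      by (rewrite <- exp_plus; apply exp_le_of_le; nra).
    pose proof (exp_pos (a * (x + t))).
    assert (exp (a * (x + t)) * sin (k_minus * (x + t))
            < exp (a * 4) * exp (- a * (z + t)) * sin (k_minus * (z + t))) by nra.
    assert (0 < a * a + k_minus * k_minus) by nra.
    nra.
Qed.

Lemma g_plus_diag_incr x a z s : 0 <= a -> 1 / 3 <= x < z -> 0 < s -> z + s <= 2 / 3 ->
  g_plus x a z < g_plus (x + s) a (z + s).
Proof.
  intros Ha Hxz Hs Hzs. pose proof PI_gt_3. pose proof k_plus_pos.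
  replace (g_plus x a z) with (g_plus (x + 0) a (z + 0)) by (now rewrite !Rplus_0_r).
  apply (strict_incr_of_deriv (fun t => g_plus (x + t) a (z + t))
    (fun t => (a * a + k_plus * k_plus) * (exp (a * (x + t)) * sin (k_plus * (x + t))
               - exp (- a * (z + t)) * sin (k_plus * (z + t)))) 0 s);
    [|intros t Ht|lra|lra|lra].
  - intros t _. unfold g_plus, W. auto_derive; auto. ring.
  - assert (Hsin : sin (k_plus * (z + t)) < sin (k_plus * (x + t)))
      by (rewrite k_plus_eq; apply sin_decreasing_1; nra).
    assert (0 < sin (k_plus * (z + t))) by (apply (sin_k_plus_pos 0); simpl; lra).
    assert (Hexp : exp (- a * (z + t)) <= exp (a * (x + t))) by (apply exp_le_of_le; nra).
    pose proof (exp_pos (- a * (z + t))).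
    assert (exp (- a * (z + t)) * sin (k_plus * (z + t))
            < exp (a * (x + t)) * sin (k_plus * (x + t))) by nra.
    assert (0 < a * a + k_plus * k_plus) by nra.
    nra.
Qed.

Lemma matches_pair_absurd x x' a z z' : 0 <= a -> 1 / 3 < x -> x < x' -> x' < 2 / 3 ->
  x < z < 2 / 3 -> x' < z' < 2 / 3 -> matches x a z -> ~ matches x' a z'.
Proof.
  intros Ha Hx Hxx' Hx' Hz Hz' [Hm Hp] [Hm' Hp'].
  assert (HW : forall y y', 0 <= y -> y < y' -> y' <= 2 / 3 -> W k_plus a y' < W k_plus a y).
  { apply W_decr. intros t Ht. apply (sin_k_plus_pos 0). simpl. lra. }
  assert (Hshift : forall y y' z, g_plus y a z - g_plus y' a z = W k_plus a y' - W k_plus a y)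
    by (intros; unfold g_plus; ring).
  assert (Hz'_lt : z' < z + (x' - x)).
  { destruct (Rlt_le_dec z' (z + (x' - x))) as [h|h]; [exact h|exfalso].
    pose proof (g_minus_diag_decr x a z (x' - x) Ha ltac:(lra) ltac:(lra) ltac:(lra)).
    replace (x + (x' - x)) with x' in * by ring.
    destruct h as [h|h]; [|rewrite <- h in *; lra].
    pose proof (g_minus_decr x' a (z + (x' - x)) z' ltac:(lra) h ltac:(lra)). lra. }
  destruct (Rle_lt_dec z' z) as [h|h].
  - assert (g_plus x' a z <= g_plus x' a z').
    { destruct h as [h|h]; [left; apply g_plus_decr; lra | rewrite h; lra]. }
    pose proof (HW x x' ltac:(lra) Hxx' ltac:(lra)). pose proof (Hshift x x' z). lra.
  - pose proof (g_plus_diag_incr x a z (z' - z) Ha ltac:(lra) ltac:(lra) ltac:(lra)).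
    replace (z + (z' - z)) with z' in * by ring.
    pose proof (HW (x + (z' - z)) x' ltac:(lra) ltac:(lra) ltac:(lra)).
    pose proof (Hshift (x + (z' - z)) x' z'). lra.
Qed.

Lemma matches_unique x x' a z z' : 0 <= a ->
  1 / 3 < x < 2 / 3 -> 1 / 3 < x' < 2 / 3 -> x < z < 2 / 3 -> x' < z' < 2 / 3 ->
  matches x a z -> matches x' a z' -> x = x'.
Proof.
  intros Ha Hx Hx' Hz Hz' Hm Hm'.
  destruct (Rtotal_order x x') as [h|[h|h]]; [exfalso|exact h|exfalso].
  - exact (matches_pair_absurd x x' a z z' Ha ltac:(lra) h ltac:(lra) Hz Hz' Hm Hm').
  - exact (matches_pair_absurd x' x a z' z Ha ltac:(lra) h ltac:(lra) Hz' Hz Hm' Hm).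
Qed.

(** * The gap between the two roots *)

Definition admissible (x a : R) : Prop := 0 < a <= 1 / 1000 /\ 1 / 2 <= x <= 13 / 20.

Definition Z_minus (x a : R) : R := root_between (g_minus x a) (1 / 3) 1.
Definition Z_plus (x a : R) : R := root_between (g_plus x a) (1 / 3) (2 / 3).
Definition gap (x a : R) : R := Z_minus x a - Z_plus x a.

Lemma continuity_pt_g_minus x a z : continuity_pt (g_minus x a) z.
Proof. apply continuity_pt_of_ex_derive. unfold g_minus, W. auto_derive. auto. Qed.

Lemma continuity_pt_g_plus x a z : continuity_pt (g_plus x a) z.
Proof. apply continuity_pt_of_ex_derive. unfold g_plus, W. auto_derive. auto. Qed.

Lemma crosses_Z_minus x a : admissible x a -> crosses_down (g_minus x a) (1 / 3) 1 (Z_minus x a).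
Proof.
  intros [Ha Hx].
  apply crosses_down_root_between_decr; [lra|intros; apply continuity_pt_g_minus| | |].
  - pose proof (g_minus_at_x_pos x a ltac:(lra) ltac:(lra)).
    pose proof (g_minus_decr x a (1 / 3) x ltac:(lra) ltac:(lra) ltac:(lra)). lra.
  - apply g_minus_at_1_neg; lra.
  - intros y y' Hy Hyy' Hy'. apply g_minus_decr; lra.
Qed.

Lemma crosses_Z_plus x a : admissible x a -> crosses_down (g_plus x a) (1 / 3) (2 / 3) (Z_plus x a).
Proof.
  intros [Ha Hx].
  apply crosses_down_root_between_decr; [lra|intros; apply continuity_pt_g_plus| | |].
  - apply g_plus_at_third_pos; lra.
  - apply g_plus_at_two_thirds_neg; lra.
  - intros y y' Hy Hyy' Hy'. apply g_plus_decr; lra.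
Qed.

Lemma matches_of_gap_zero x a : admissible x a -> gap x a = 0 ->
  x < Z_plus x a < 2 / 3 /\ matches x a (Z_plus x a).
Proof.
  intros HA Hgap. unfold gap in Hgap.
  pose proof (crosses_Z_minus x a HA) as Cm. pose proof (crosses_Z_plus x a HA) as Cp.
  destruct HA as [Ha Hx].
  assert (Hxz : x < Z_minus x a).
  { apply (crosses_down_lt _ _ _ _ _ Cm); [lra|]. apply g_minus_at_x_pos; lra. }
  replace (Z_minus x a) with (Z_plus x a) in * by lra.
  split; [split; [exact Hxz | apply (proj1 Cp)] | split].
  - exact (crosses_down_root _ _ _ _ Cm).
  - exact (crosses_down_root _ _ _ _ Cp).
Qed.

Lemma Delta_root_iff_gap_zero x a : admissible x a -> (Delta_root x a <-> gap x a = 0).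
Proof.
  intros HA. split.
  - intros HD. pose proof HA as [Ha Hx].
    destruct (matches_of_Delta_root x a Ha Hx HD) as [z [Hz [Hm Hp]]].
    unfold gap.
    rewrite <- (crosses_down_zero _ _ _ _ z (crosses_Z_minus x a HA)) by (auto; lra).
    rewrite <- (crosses_down_zero _ _ _ _ z (crosses_Z_plus x a HA)) by (auto; lra).
    ring.
  - intros Hgap. destruct (matches_of_gap_zero x a HA Hgap) as [Hz Hm].
    destruct HA as [_ Hx]. apply (Delta_root_of_matches x a (Z_plus x a)); auto;
      unfold in_Iminus; lra.
Qed.

Lemma gap_zero_unique x x' a : admissible x a -> admissible x' a ->
  gap x a = 0 -> gap x' a = 0 -> x = x'.
Proof.
  intros HA HA' Hg Hg'.
  destruct (matches_of_gap_zero x a HA Hg) as [Hz Hm].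
  destruct (matches_of_gap_zero x' a HA' Hg') as [Hz' Hm'].
  destruct HA as [Ha Hx]. destruct HA' as [_ Hx'].
  apply (matches_unique x x' a (Z_plus x a) (Z_plus x' a)); auto; lra.
Qed.

Lemma continuity_pt_gap_x x a : 1 / 2 < x < 13 / 20 -> 0 < a <= 1 / 1000 ->
  continuity_pt (fun y => gap y a) x.
Proof.
  intros Hx Ha.
  assert (Hnear : locally x (fun y => admissible y a)).
  { apply (locally_interval _ _ (1 / 2) (13 / 20)); simpl; try lra.
    intros y Hy Hy'. split; lra. }
  apply continuity_pt_minus.
  - apply (continuity_pt_crossing (fun y => g_minus y a) _ (1 / 3) 1).
    + apply (filter_imp _ _ (fun y => crosses_Z_minus y a) Hnear).
    + intros z _. apply continuity_pt_of_ex_derive. unfold g_minus, W. auto_derive. auto.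
  - apply (continuity_pt_crossing (fun y => g_plus y a) _ (1 / 3) (2 / 3)).
    + apply (filter_imp _ _ (fun y => crosses_Z_plus y a) Hnear).
    + intros z _. apply continuity_pt_of_ex_derive. unfold g_plus, W. auto_derive. auto.
Qed.

Lemma continuity_pt_gap_a x a : 1 / 2 <= x <= 13 / 20 -> 0 < a < 1 / 1000 ->
  continuity_pt (gap x) a.
Proof.
  intros Hx Ha.
  assert (Hnear : locally a (fun b => admissible x b)).
  { apply (locally_interval _ _ 0 (1 / 1000)); simpl; try lra.
    intros b Hb Hb'. split; lra. }
  apply continuity_pt_minus.
  - apply (continuity_pt_crossing (g_minus x) _ (1 / 3) 1).
    + apply (filter_imp _ _ (crosses_Z_minus x) Hnear).
    + intros z _. apply continuity_pt_of_ex_derive. unfold g_minus, W. auto_derive. auto.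
  - apply (continuity_pt_crossing (g_plus x) _ (1 / 3) (2 / 3)).
    + apply (filter_imp _ _ (crosses_Z_plus x) Hnear).
    + intros z _. apply continuity_pt_of_ex_derive. unfold g_plus, W. auto_derive. auto.
Qed.

Lemma crosses_down_gap l u a : 1 / 2 < l -> l < u -> u < 13 / 20 -> 0 < a <= 1 / 1000 ->
  0 < gap l a -> gap u a < 0 ->
  crosses_down (fun x => gap x a) l u (root_between (fun x => gap x a) l u).
Proof.
  intros Hl Hlu Hu Ha Hgl Hgu. apply crosses_down_root_between; auto.
  - intros y Hy. apply continuity_pt_gap_x; lra.
  - intros y y' Hy Hy' Hg Hg'. apply (gap_zero_unique y y' a); auto; split; lra.
Qed.

Definition x0_lhs (x : R) : R :=
  32 / (9 * PI) + (2 * x / 3) * cot (3 * PI * x / 2) + (4 - 2 * x) * cot (PI * x / 2).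

Lemma cot_decr u v : 0 < u -> u < v -> v < PI -> cot v < cot u.
Proof.
  intros Hu Huv Hv.
  assert (0 < sin u) by (apply sin_gt_0; lra).
  assert (0 < sin v) by (apply sin_gt_0; lra).
  assert (Hd : 0 < sin (v - u)) by (apply sin_gt_0; lra). rewrite sin_minus in Hd.
  assert (E : cot u - cot v = (sin v * cos u - cos v * sin u) / (sin u * sin v))
    by (unfold cot; field; lra).
  assert (0 < (sin v * cos u - cos v * sin u) / (sin u * sin v))
    by (apply Rdiv_lt_0_compat; nra).
  lra.
Qed.

Lemma cot_pos u : 0 < u < PI / 2 -> 0 < cot u.
Proof.
  intros Hu. unfold cot. apply Rdiv_lt_0_compat; [apply cos_gt_0 | apply sin_gt_0]; lra.
Qed.

Lemma cot_neg u : PI / 2 < u < PI -> cot u < 0.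
Proof.
  intros Hu. unfold cot. assert (0 < sin u) by (apply sin_gt_0; lra).
  assert (cos u < 0) by (apply cos_lt_0; lra).
  assert (0 < - cos u / sin u) by (apply Rdiv_lt_0_compat; lra).
  unfold Rdiv in *. lra.
Qed.

Lemma x0_lhs_decr x y : 1 / 3 < x -> x < y -> y < 2 / 3 -> x0_lhs y < x0_lhs x.
Proof.
  intros Hx Hxy Hy. unfold x0_lhs. pose proof PI_gt_3.
  assert (cot (3 * PI * y / 2) < cot (3 * PI * x / 2)) by (apply cot_decr; nra).
  assert (cot (PI * y / 2) < cot (PI * x / 2)) by (apply cot_decr; nra).
  assert (cot (3 * PI * x / 2) < 0) by (apply cot_neg; nra).
  assert (0 < cot (PI * y / 2)) by (apply cot_pos; nra).
  nra.
Qed.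

Lemma continuity_pt_x0_lhs x : 1 / 3 < x < 2 / 3 -> continuity_pt x0_lhs x.
Proof.
  intros Hx. pose proof PI_gt_3.
  assert (sin (3 * PI * x / 2) <> 0) by (apply Rgt_not_eq, sin_gt_0; nra).
  assert (sin (PI * x / 2) <> 0) by (apply Rgt_not_eq, sin_gt_0; nra).
  apply continuity_pt_of_ex_derive. unfold x0_lhs, cot. auto_derive. auto.
Qed.

Lemma x0_lhs_half_pos : 0 < x0_lhs (1 / 2).
Proof.
  unfold x0_lhs, cot. pose proof PI_gt_3.
  replace (3 * PI * (1 / 2) / 2) with (PI - PI / 4) by field.
  replace (PI * (1 / 2) / 2) with (PI / 4) by field.
  rewrite cos_minus, cos_PI, sin_PI, sin_PI_x, cos_PI4, sin_PI4.
  assert (0 < sqrt 2) by (apply sqrt_lt_R0; lra).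
  assert (0 < 32 / (9 * PI)) by (apply Rdiv_lt_0_compat; lra).
  replace ((-1 * (1 / sqrt 2) + 0 * (1 / sqrt 2)) / (1 / sqrt 2)) with (-1) by (field; lra).
  replace ((1 / sqrt 2) / (1 / sqrt 2)) with 1 by (field; lra). lra.
Qed.

Lemma x0_lhs_13_20_neg : x0_lhs (13 / 20) < 0.
Proof.
  unfold x0_lhs. pose proof PI_gt_3. pose proof PI_4.
  replace (3 * PI * (13 / 20) / 2) with (PI - PI / 40) by field.
  assert (C1 : cot (PI - PI / 40) <= - (995 / 100)).
  { unfold cot. rewrite cos_minus, cos_PI, sin_PI, sin_PI_x.
    assert (sin (PI / 40) < PI / 40) by (apply sin_lt_x; lra).
    assert (0 < sin (PI / 40)) by (apply sin_gt_0; lra).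
    pose proof cos_PI_40_bounds.
    apply (Rmult_le_reg_r (sin (PI / 40))); [lra|].
    unfold Rdiv. rewrite Rmult_assoc, Rinv_l by lra. nra. }
  assert (C2 : cot (PI * (13 / 20) / 2) <= 1).
  { assert (Hlt : cot (PI * (13 / 20) / 2) < cot (PI / 4)) by (apply cot_decr; lra).
    unfold cot at 2 in Hlt. rewrite cos_PI4, sin_PI4 in Hlt.
    assert (0 < sqrt 2) by (apply sqrt_lt_R0; lra).
    replace ((1 / sqrt 2) / (1 / sqrt 2)) with 1 in Hlt by (field; lra). lra. }
  assert (32 / (9 * PI) < 32 / 27)
    by (apply Rmult_lt_compat_l; [lra|apply Rinv_lt_contravar; nra]).
  nra.
Qed.

Definition x0_root : R := root_between x0_lhs (1 / 2) (13 / 20).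

Lemma crosses_x0_root : crosses_down x0_lhs (1 / 2) (13 / 20) x0_root.
Proof.
  apply crosses_down_root_between_decr; [lra| | apply x0_lhs_half_pos | apply x0_lhs_13_20_neg|].
  - intros y Hy. apply continuity_pt_x0_lhs. lra.
  - intros y y' Hy Hyy' Hy'. apply x0_lhs_decr; lra.
Qed.

(** * First order in a *)

(* [x + a * slope_minus x] and [x + a * slope_plus x] are the first-order expansions in [a]
   of [Z_minus x a] and [Z_plus x a]. *)
Definition slope_minus (x : R) : R :=
  (k_minus * cos (k_minus * x) * (4 - 2 * x) + 2 * sin (k_minus * x))
    / (k_minus * k_minus * sin (k_minus * x)).
Definition slope_plus (x : R) : R :=
  (2 * sin (k_plus * x) - 2 * x * k_plus * cos (k_plus * x))
    / (k_plus * k_plus * sin (k_plus * x)).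

Lemma slope_minus_sub_slope_plus x : 1 / 3 < x < 2 / 3 ->
  slope_minus x - slope_plus x = 2 / PI * x0_lhs x.
Proof.
  intros Hx. pose proof PI_gt_3.
  assert (0 < sin (k_minus * x)) by (apply sin_k_minus_pos; lra).
  assert (0 < sin (k_plus * x)) by (apply (sin_k_plus_pos 0); simpl; lra).
  unfold slope_minus, slope_plus, x0_lhs, cot.
  replace (3 * PI * x / 2) with (k_plus * x) by (rewrite k_plus_eq; field).
  replace (PI * x / 2) with (k_minus * x) by (rewrite k_minus_eq; field).
  rewrite k_minus_eq, k_plus_eq in *. field. lra.
Qed.

Lemma is_derive_g_minus_line x c : 0 < x < 2 ->
  is_derive (fun a => g_minus x a (x + a * c)) 0
    (k_minus * k_minus * sin (k_minus * x) * (slope_minus x - c)).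
Proof.
  intros Hx. assert (0 < sin (k_minus * x)) by (apply sin_k_minus_pos; lra).
  pose proof k_minus_pos. unfold g_minus, W, slope_minus. auto_derive; auto.
  repeat rewrite ?Rmult_0_l, ?Rmult_0_r, ?Ropp_0, ?Rplus_0_r, ?exp_0. field. nra.
Qed.

Lemma is_derive_g_plus_line x c : 0 < x < 2 / 3 ->
  is_derive (fun a => g_plus x a (x + a * c)) 0
    (k_plus * k_plus * sin (k_plus * x) * (slope_plus x - c)).
Proof.
  intros Hx. assert (0 < sin (k_plus * x)) by (apply (sin_k_plus_pos 0); simpl; lra).
  pose proof k_plus_pos. unfold g_plus, W, slope_plus. auto_derive; auto.
  repeat rewrite ?Rmult_0_l, ?Rmult_0_r, ?Ropp_0, ?Rplus_0_r, ?exp_0. field. nra.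
Qed.

Lemma gap_sign x : 1 / 2 <= x <= 13 / 20 ->
  (0 < x0_lhs x -> at_right 0 (fun a => 0 < gap x a)) /\
  (x0_lhs x < 0 -> at_right 0 (fun a => gap x a < 0)).
Proof.
  intros Hx. pose proof PI_gt_3. pose proof k_minus_pos. pose proof k_plus_pos.
  assert (Hadm : at_right 0 (fun a => admissible x a)).
  { apply (filter_imp (fun a => 0 < a < 1 / 1000)); [intros a Ha; split; lra|].
    apply at_right_0_small. lra. }
  set (c := (slope_minus x + slope_plus x) / 2).
  assert (Hdiff := slope_minus_sub_slope_plus x ltac:(lra)).
  assert (0 < k_minus * k_minus * sin (k_minus * x))
    by (pose proof (sin_k_minus_pos x ltac:(lra)); apply Rmult_lt_0_compat; nra).
  assert (0 < k_plus * k_plus * sin (k_plus * x))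
    by (pose proof (sin_k_plus_pos 0 x ltac:(simpl; lra)); apply Rmult_lt_0_compat; nra).
  assert (H2PI : 0 < 2 / PI) by (apply Rdiv_lt_0_compat; lra).
  destruct (crossing_vs_line (g_minus x) (Z_minus x) (1 / 3) 1 x c _ ltac:(lra)
    (filter_imp _ _ (crosses_Z_minus x) Hadm)
    ltac:(unfold g_minus, W; repeat rewrite ?Ropp_0, ?Rmult_0_l, ?exp_0; ring)
    (is_derive_g_minus_line x c ltac:(lra))) as [Hm_pos Hm_neg].
  destruct (crossing_vs_line (g_plus x) (Z_plus x) (1 / 3) (2 / 3) x c _ ltac:(lra)
    (filter_imp _ _ (crosses_Z_plus x) Hadm)
    ltac:(unfold g_plus, W; repeat rewrite ?Ropp_0, ?Rmult_0_l, ?exp_0; ring)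
    (is_derive_g_plus_line x c ltac:(lra))) as [Hp_pos Hp_neg].
  unfold gap. split; intros Hs.
  - assert (0 < slope_minus x - c /\ slope_plus x - c < 0) as [Hm Hp]
      by (unfold c; split; nra).
    specialize (Hm_pos ltac:(nra)). specialize (Hp_neg ltac:(nra)).
    generalize (filter_and _ _ Hm_pos Hp_neg).
    apply filter_imp. intros a [Hlo Hhi]. lra.
  - assert (slope_minus x - c < 0 /\ 0 < slope_plus x - c) as [Hm Hp]
      by (unfold c; split; nra).
    specialize (Hm_neg ltac:(nra)). specialize (Hp_pos ltac:(nra)).
    generalize (filter_and _ _ Hm_neg Hp_pos).
    apply filter_imp. intros a [Hlo Hhi]. lra.
Qed.

Definition x0_margin : R := Rmin (x0_root - 1 / 2) (13 / 20 - x0_root) / 2.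

Lemma x0_margin_bounds :
  0 < x0_margin /\ 1 / 2 < x0_root - x0_margin /\ x0_root + x0_margin < 13 / 20.
Proof. destruct (proj1 crosses_x0_root). unfold x0_margin, Rmin. destruct Rle_dec; lra. Qed.

Lemma gap_signs_near_x0_root e : 0 < e <= x0_margin ->
  at_right 0 (fun a => 0 < gap (x0_root - e) a /\ gap (x0_root + e) a < 0).
Proof.
  intros He. pose proof x0_margin_bounds.
  apply filter_and; apply gap_sign; try lra.
  - apply (crosses_down_pos _ _ _ _ _ crosses_x0_root). lra.
  - apply (crosses_down_neg _ _ _ _ _ crosses_x0_root). lra.
Qed.

Definition x_branch (a : R) : R :=
  if Rle_dec a 0 then x0_root
  else root_between (fun x => gap x a) (x0_root - x0_margin) (x0_root + x0_margin).

Lemma x_branch_crosses : at_right 0 (fun a => a < 1 / 1000 /\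
  crosses_down (fun x => gap x a) (x0_root - x0_margin) (x0_root + x0_margin) (x_branch a)).
Proof.
  pose proof x0_margin_bounds.
  assert (Hsmall := at_right_0_small (1 / 1000) ltac:(lra)).
  assert (Hsigns := gap_signs_near_x0_root x0_margin ltac:(lra)).
  generalize (filter_and _ _ Hsmall Hsigns).
  apply filter_imp. intros a [Ha [Hl Hu]]. split; [lra|].
  unfold x_branch. destruct Rle_dec; [lra|]. apply crosses_down_gap; lra.
Qed.

Lemma x_branch_limit eps : 0 < eps -> at_right 0 (fun a => Rabs (x_branch a - x0_root) < eps).
Proof.
  intros Heps. pose proof x0_margin_bounds. set (e := Rmin eps x0_margin / 2).
  assert (He : 0 < e < eps /\ e < x0_margin) by (unfold e, Rmin; destruct Rle_dec; lra).
  assert (Hsigns := gap_signs_near_x0_root e ltac:(lra)).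
  generalize (filter_and _ _ x_branch_crosses Hsigns).
  apply filter_imp. intros a [[_ C] [Hl Hu]].
  apply (crosses_down_lt _ _ _ _ _ C) in Hl; [|lra].
  apply (crosses_down_gt _ _ _ _ _ C) in Hu; [|lra].
  apply Rabs_def1; lra.
Qed.

Theorem lemma2 :
  exists (al : R) (x0 : R) (xf : R -> R),
    0 < al /\
    in_Iminus x0 /\ x0_equation x0 /\
    xf 0 = x0 /\
    (* x(a) -> x0 as a -> 0+ *)
    (forall eps, 0 < eps -> exists del, 0 < del /\
        forall a, 0 < a < del -> Rabs (xf a - x0) < eps) /\
    (forall a, 0 < a < al -> continuity_pt xf a) /\
    (forall a, 0 < a < al -> in_Iminus (xf a) /\ Delta_root (xf a) a) /\
    (* the roots near x0 are given by x(a) *)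
    (exists del, 0 < del /\
       forall a x, 0 < a < al -> Rabs (x - x0) < del -> Delta_root x a ->
         x = xf a).
Proof.
  destruct (at_right_0_bound _ x_branch_crosses) as [al [Hal Hcross]].
  pose proof x0_margin_bounds.
  assert (Hadm : forall a x, 0 < a < al ->
            x0_root - x0_margin <= x <= x0_root + x0_margin -> admissible x a)
    by (intros a x Ha Hx; destruct (Hcross a Ha); split; lra).
  exists al, x0_root, x_branch. split; [exact Hal|]. split; [unfold in_Iminus; lra|].
  split; [exact (crosses_down_root _ _ _ _ crosses_x0_root)|].
  split; [unfold x_branch; destruct Rle_dec; lra|].
  split; [|split; [|split]].
  - intros eps Heps. exact (at_right_0_bound _ (x_branch_limit eps Heps)).
  - intros a Ha. apply (continuity_pt_crossing (fun s x => gap x s) x_branch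
                          (x0_root - x0_margin) (x0_root + x0_margin)).
    + apply (locally_interval _ _ 0 al); simpl; try lra. intros s Hs Hs'. apply Hcross; lra.
    + intros y Hy. apply continuity_pt_gap_a; [lra|]. destruct (Hcross a Ha); lra.
  - intros a Ha. destruct (Hcross a Ha) as [_ C]. destruct (proj1 C). split.
    + unfold in_Iminus. lra.
    + apply Delta_root_iff_gap_zero; [apply Hadm; lra|]. exact (crosses_down_root _ _ _ _ C).
  - exists x0_margin. split; [lra|]. intros a x Ha Hx HD. apply Rabs_def2 in Hx.
    apply (crosses_down_zero _ _ _ _ x (proj2 (Hcross a Ha))); [lra|].
    apply Delta_root_iff_gap_zero; [apply Hadm; lra|exact HD].
Qed.
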